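(* Let $r$ be a positive odd integer and $x\in\mathbb{I}$. Then: (i) $y_1(x)\le\frac1r$ if and only if $d_1(x)\ge r$. (ii) If $n\ge2$ and $\epsilon_n(x)=\epsilon_{n-1}(x)$ (i.e. $s_{n-1}(x)=1$), then $y_n(x)\le\frac1r$ if and only if $d_n(x)\ge r(d_{n-1}(x)-1)$. (iii) If $n\ge2$ and $\epsilon_n(x)=-\epsilon_{n-1}(x)$ (i.e. $s_{n-1}(x)=-1$), then $y_n(x)\le\frac1r$ if and only if $d_n(x)\ge r(d_{n-1}(x)+1)$.
   Context: $\mathbb{I}=(0,1)\setminus\mathbb{Q}$. Define $T\colon[0,1)\to[0,1)$ by: for $k\in\mathbb{N}$, $Tx=\lceil 1/x\rceil x-1$ if $x\in(\frac{1}{2k},\frac{1}{2k-1})$; $Tx=1-\lfloor 1/x\rfloor x$ if $x\in(\frac{1}{2k+1},\frac{1}{2k})$; $Tx=0$ if $x\in\{0\}\cup\{1/n\colon n\ge 2\}$. For $x\in(0,1)$ define $d_1(x)=\lceil 1/x\rceil$, $s_1(x)=1$ if $x\in[\frac{1}{2k},\frac{1}{2k-1})$ for some $k$, and $d_1(x)=\lfloor 1/x\rfloor$, $s_1(x)=-1$ if $x\in[\frac{1}{2k+1},\frac{1}{2k})$ for some $k$; $d_{n+1}(x)=d_1(T^nx)$, $s_{n+1}(x)=s_1(T^nx)$, $\epsilon_1(x)=1$, $\epsilon_{n+1}(x)=\prod_{k=1}^ns_k(x)$. For $x\in\mathbb{I}$ define $y_1(x)=x$ and, for $n\ge2$, $y_n(x)=(d_{n-1}(x)-1)T^{n-1}x$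 if $\epsilon_n(x)=\epsilon_{n-1}(x)$, and $y_n(x)=(d_{n-1}(x)+1)T^{n-1}x$ if $\epsilon_n(x)=-\epsilon_{n-1}(x)$. *)

From Stdlib Require Import Reals Lra Lia ZArith ClassicalEpsilon.
Open Scope R_scope.

(* floor and ceiling on R, with values in Z.  Int_part x = up x - 1 = floor x. *)
Definition floorZ (x : R) : Z := Int_part x.
Definition ceilZ (x : R) : Z := (- Int_part (- x))%Z.

Definition irrational (x : R) : Prop :=
  ~ exists p q : Z, q <> 0%Z /\ x = IZR p / IZR q.
Definition in_I (x : R) : Prop := 0 < x < 1 /\ irrational x.

Definition decP (P : Prop) : bool :=
  if excluded_middle_informative P then true else false.

Definition in_odd_open (x : R) : Prop :=
  exists k : nat, (1 <= k)%nat /\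
    1 / INR (2 * k) < x < 1 / (INR (2 * k) - 1).
Definition in_even_open (x : R) : Prop :=
  exists k : nat, (1 <= k)%nat /\
    1 / INR (2 * k + 1) < x < 1 / INR (2 * k).
Definition in_odd_half (x : R) : Prop :=
  exists k : nat, (1 <= k)%nat /\
    1 / INR (2 * k) <= x < 1 / (INR (2 * k) - 1).

Definition T (x : R) : R :=
  if decP (in_odd_open x) then IZR (ceilZ (1 / x)) * x - 1
  else if decP (in_even_open x) then 1 - IZR (floorZ (1 / x)) * x
  else 0.

Definition d1 (x : R) : Z :=
  if decP (in_odd_half x) then ceilZ (1 / x) else floorZ (1 / x).
Definition s1 (x : R) : Z :=
  if decP (in_odd_half x) then 1%Z else (-1)%Z.

Definition d (n : nat) (x : R) : Z := d1 (Nat.iter (n - 1) T x).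
Definition s (n : nat) (x : R) : Z := s1 (Nat.iter (n - 1) T x).

(* epsilon_1 = 1, epsilon_{n+1} = prod_{k=1}^n s_k = epsilon_n * s_n *)
Fixpoint eps (n : nat) (x : R) : Z :=
  match n with
  | S ((S _) as m) => (eps m x * s m x)%Z
  | _ => 1%Z
  end.

Definition y (n : nat) (x : R) : R :=
  match n with
  | 0%nat | 1%nat => x
  | S m =>
      if Z.eq_dec (eps n x) (eps m x)
      then (IZR (d m x) - 1) * Nat.iter m T x
      else (IZR (d m x) + 1) * Nat.iter m T x
  end.

(* With m = floor(1/x), irrationality of x puts 1/x strictly between m and m + 1, so
   x <= 1/q iff q <= m for every positive integer q; and d_1(x) is the even one of m and
   m + 1, so for odd q also iff q <= d_1(x).  Every digit d_k is even, hence
   y_n = (d_{n-1} -+ 1) T^{n-1} x is an odd multiple of T^{n-1} x, and (ii), (iii) are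
   the case q = r (d_{n-1} -+ 1) applied to T^{n-1} x, which again lies in I. *)
From Stdlib Require Import Reals ZArith Lra Lia ClassicalEpsilon.
(* Imported after Reals, whose Ranalysis exports an unrelated [d1]. *)
Open Scope R_scope.

Lemma Rlt_div_1_swap a b : 0 < a -> 0 < b -> (a < 1 / b <-> b < 1 / a).
Proof.
  intros Ha Hb; rewrite !Rdiv_1_l; split; intro H.
  - rewrite <- (Rinv_inv b); apply Rinv_0_lt_contravar; assumption.
  - rewrite <- (Rinv_inv a); apply Rinv_0_lt_contravar; assumption.
Qed.

Lemma Rle_div_1_swap a b : 0 < a -> 0 < b -> (a <= 1 / b <-> b <= 1 / a).
Proof.
  intros Ha Hb; rewrite !Rdiv_1_l; split; intro H.
  - rewrite <- (Rinv_inv b); apply Rinv_le_contravar; assumption.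
  - rewrite <- (Rinv_inv a); apply Rinv_le_contravar; assumption.
Qed.

Lemma Rdiv_1_lt_swap a b : 0 < a -> 0 < b -> (1 / a < b <-> 1 / b < a).
Proof.
  intros Ha Hb; rewrite !Rdiv_1_l; split; intro H.
  - rewrite <- (Rinv_inv a); apply Rinv_0_lt_contravar; [apply Rinv_0_lt_compat|]; assumption.
  - rewrite <- (Rinv_inv b); apply Rinv_0_lt_contravar; [apply Rinv_0_lt_compat|]; assumption.
Qed.

Lemma Rdiv_1_le_swap a b : 0 < a -> 0 < b -> (1 / a <= b <-> 1 / b <= a).
Proof.
  intros Ha Hb; rewrite !Rdiv_1_l; split; intro H.
  - rewrite <- (Rinv_inv a); apply Rinv_le_contravar; [apply Rinv_0_lt_compat|]; assumption.
  - rewrite <- (Rinv_inv b); apply Rinv_le_contravar; [apply Rinv_0_lt_compat|]; assumption.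
Qed.

Lemma Rmult_le_div_1_iff a c t : 0 < a -> 0 < c -> (c * t <= 1 / a <-> t <= 1 / (a * c)).
Proof.
  intros Ha Hc.
  replace (1 / (a * c)) with (/ c * (1 / a)) by (field; lra).
  split; intro H.
  - apply (Rmult_le_reg_l c); [assumption|].
    rewrite <- Rmult_assoc, Rinv_r, Rmult_1_l by lra; assumption.
  - apply (Rmult_le_compat_l c) in H; [|lra].
    rewrite <- Rmult_assoc, Rinv_r, Rmult_1_l in H by lra; assumption.
Qed.

Lemma ceilZ_of_between u z : IZR z < u < IZR z + 1 -> ceilZ u = (z + 1)%Z.
Proof.
  intros Hu; unfold ceilZ.
  rewrite <- (Int_part_spec (- u) (- z - 1)); [lia|].
  rewrite minus_IZR, opp_IZR; lra.
Qed.

Lemma irrational_affine (a b : Z) x :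
  b <> 0%Z -> irrational x -> irrational (IZR a + IZR b * x).
Proof.
  intros Hb Hx [p [q [Hq E]]]; apply Hx.
  exists (p - a * q)%Z, (b * q)%Z; split; [lia|].
  apply not_0_IZR in Hb; apply not_0_IZR in Hq.
  rewrite minus_IZR, !mult_IZR.
  replace x with ((IZR a + IZR b * x - IZR a) / IZR b) by (field; assumption).
  rewrite E; field; split; assumption.
Qed.

Definition floor_inv (x : R) : Z := floorZ (1 / x).

Lemma floor_inv_bounds x : in_I x ->
  (1 <= floor_inv x)%Z /\ IZR (floor_inv x) < 1 / x < IZR (floor_inv x) + 1.
Proof.
  intros [[H0 H1] Hirr]; unfold floor_inv, floorZ.
  assert (Hinv : 1 < 1 / x) by (apply Rlt_div_1_swap; lra).
  destruct (base_Int_part (1 / x)) as [Hle Hgt].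
  assert (Hneq : IZR (Int_part (1 / x)) <> 1 / x).
  { intro E; apply Hirr; exists 1%Z, (Int_part (1 / x)); split.
    - intro Z0; rewrite Z0 in E; lra.
    - rewrite E; field; lra. }
  destruct Hle as [Hlt|Heq]; [|contradiction].
  assert (Hpos : 0 < IZR (Int_part (1 / x))) by lra.
  apply lt_IZR in Hpos; split; [lia | lra].
Qed.

Section Digit.

Variable x : R.
Hypothesis Hx : in_I x.

Let z := floor_inv x.

Lemma odd_floor_inv_of_in_odd_half : in_odd_half x -> Z.odd z = true.
Proof.
  intros [k [Hk [Hlo Hhi]]].
  destruct Hx as [[H0 _] Hirr].
  assert (H2k : 1 < INR (2 * k)) by (apply lt_1_INR; lia).
  apply Rdiv_1_le_swap in Hlo; [|lra|lra].
  apply Rlt_div_1_swap in Hhi; [|lra|lra].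
  assert (Hne : 1 / x <> INR (2 * k)).
  { intro E; apply Hirr; exists 1%Z, (Z.of_nat (2 * k)); split; [lia|].
    rewrite <- INR_IZR_INZ, <- E; field; lra. }
  assert (Ez : z = (Z.of_nat (2 * k) - 1)%Z).
  { unfold z, floor_inv, floorZ; symmetry; apply Int_part_spec.
    rewrite minus_IZR, <- INR_IZR_INZ; lra. }
  apply Z.odd_spec; exists (Z.of_nat k - 1)%Z; lia.
Qed.

Lemma in_odd_open_of_odd_floor_inv : Z.odd z = true -> in_odd_open x.
Proof.
  intros Hodd; apply Z.odd_spec in Hodd; destruct Hodd as [j Hj].
  destruct (floor_inv_bounds x Hx) as [Hz1 Hz]; fold z in Hz1, Hz.
  pose proof (IZR_le _ _ Hz1) as HzR; destruct Hx as [[H0 _] _].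
  exists (Z.to_nat (j + 1)); split; [lia|].
  assert (E2k : INR (2 * Z.to_nat (j + 1)) = IZR z + 1).
  { rewrite INR_IZR_INZ, <- plus_IZR; f_equal; lia. }
  rewrite E2k; split.
  - apply Rdiv_1_lt_swap; lra.
  - apply Rlt_div_1_swap; lra.
Qed.

Lemma in_even_open_of_even_floor_inv : Z.even z = true -> in_even_open x.
Proof.
  intros Heven; apply Z.even_spec in Heven; destruct Heven as [j Hj].
  destruct (floor_inv_bounds x Hx) as [Hz1 Hz]; fold z in Hz1, Hz.
  pose proof (IZR_le _ _ Hz1) as HzR; destruct Hx as [[H0 _] _].
  exists (Z.to_nat j); split; [lia|].
  assert (E2k : INR (2 * Z.to_nat j) = IZR z) by (rewrite INR_IZR_INZ; f_equal; lia).
  rewrite plus_INR, E2k; simpl INR; split.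
  - apply Rdiv_1_lt_swap; lra.
  - apply Rlt_div_1_swap; lra.
Qed.

Lemma d1_even_between : Z.Even (d1 x) /\ (z <= d1 x <= z + 1)%Z.
Proof.
  destruct (floor_inv_bounds x Hx) as [_ Hz]; fold z in Hz.
  unfold d1, decP; destruct (excluded_middle_informative (in_odd_half x)) as [Hhalf|Hhalf].
  - rewrite (ceilZ_of_between _ _ Hz).
    apply odd_floor_inv_of_in_odd_half, Z.odd_spec in Hhalf; destruct Hhalf as [j Hj].
    split; [exists (j + 1)%Z|]; lia.
  - fold (floor_inv x) z; split; [|lia].
    apply Z.even_spec; rewrite <- Z.negb_odd.
    destruct (Z.odd z) eqn:Hodd; [|reflexivity].
    exfalso; apply Hhalf.
    destruct (in_odd_open_of_odd_floor_inv Hodd) as [k [Hk [Hlo Hhi]]].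
    exists k; split; [assumption | split; lra].
Qed.

Lemma T_in_I : in_I (T x).
Proof.
  destruct (floor_inv_bounds x Hx) as [Hz1 Hz]; fold z in Hz1, Hz.
  destruct Hx as [[H0 H1] Hirr].
  assert (Hinvx : 1 / x * x = 1) by (field; lra).
  assert (Hlo : IZR z * x < 1 / x * x) by (apply Rmult_lt_compat_r; lra).
  assert (Hhi : 1 / x * x < (IZR z + 1) * x) by (apply Rmult_lt_compat_r; lra).
  rewrite Hinvx in Hlo, Hhi.
  assert (Hzx : 0 < IZR z * x) by (apply Rmult_lt_0_compat; [apply IZR_lt; lia | lra]).
  unfold T, decP.
  destruct (excluded_middle_informative (in_odd_open x)) as [_|Hnot_odd].
  - rewrite (ceilZ_of_between _ _ Hz), plus_IZR.
    split; [lra|].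
    replace ((IZR z + 1) * x - 1) with (IZR (-1) + IZR (z + 1) * x)
      by (rewrite plus_IZR; ring).
    apply irrational_affine; [lia | assumption].
  - destruct (excluded_middle_informative (in_even_open x)) as [_|Hnot_even].
    + fold (floor_inv x) z; split; [lra|].
      replace (1 - IZR z * x) with (IZR 1 + IZR (- z) * x) by (rewrite opp_IZR; ring).
      apply irrational_affine; [lia | assumption].
    + exfalso; destruct (Z.odd z) eqn:Hpar.
      * exact (Hnot_odd (in_odd_open_of_odd_floor_inv Hpar)).
      * apply Hnot_even, in_even_open_of_even_floor_inv.
        rewrite <- Z.negb_odd, Hpar; reflexivity.
Qed.

Lemma le_inv_iff_d1_ge (q : Z) :
  (0 < q)%Z -> Z.Odd q -> (x <= 1 / IZR q <-> (d1 x >= q)%Z).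
Proof.
  intros Hq [j Hj].
  destruct (floor_inv_bounds x Hx) as [_ Hz]; fold z in Hz.
  destruct d1_even_between as [[i Hi] Hd].
  destruct Hx as [[H0 _] _].
  rewrite Rle_div_1_swap by (try apply IZR_lt; assumption).
  assert (Hfloor : IZR q <= 1 / x <-> (q <= z)%Z).
  { split; intro H.
    - assert (Hlt : IZR q < IZR (z + 1)) by (rewrite plus_IZR; lra).
      apply lt_IZR in Hlt; lia.
    - apply IZR_le in H; lra. }
  rewrite Hfloor; lia.
Qed.

End Digit.

Lemma iter_T_in_I x k : in_I x -> in_I (Nat.iter k T x).
Proof.
  intros Hx; induction k as [|k IH]; [assumption|].
  apply T_in_I; assumption.
Qed.

Lemma mul_le_inv_iff_d1_ge t (c q : Z) : in_I t -> (0 < q)%Z -> (0 < c)%Z ->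
  Z.Odd q -> Z.Odd c -> (IZR c * t <= 1 / IZR q <-> (d1 t >= q * c)%Z).
Proof.
  intros Ht Hq Hc [i Hi] [j Hj].
  rewrite Rmult_le_div_1_iff, <- mult_IZR by (apply IZR_lt; assumption).
  apply le_inv_iff_d1_ge; [assumption | lia |].
  exists (2 * i * j + i + j)%Z; lia.
Qed.

Lemma d_even_ge_2 n x : in_I x -> Z.Even (d n x) /\ (2 <= d n x)%Z.
Proof.
  intros Hx; unfold d.
  pose proof (iter_T_in_I x (n - 1) Hx) as Ht.
  destruct (d1_even_between _ Ht) as [[j Hj] Hd].
  destruct (floor_inv_bounds _ Ht) as [Hz1 _].
  split; [exists j|]; lia.
Qed.

Lemma eps_neq0 n x : eps n x <> 0%Z.
Proof.
  induction n as [|[|n] IH]; try discriminate.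
  change (eps (S (S n)) x) with (eps (S n) x * s (S n) x)%Z.
  apply Z.neq_mul_0; split; [assumption|].
  unfold s, s1; destruct (decP _); discriminate.
Qed.

Lemma y_of_eps_eq n x : (2 <= n)%nat -> eps n x = eps (n - 1) x ->
  y n x = IZR (d (n - 1) x - 1) * Nat.iter (n - 1) T x.
Proof.
  intros Hn E; destruct n as [|[|m]]; try lia.
  unfold y; rewrite minus_IZR.
  destruct (Z.eq_dec _ _) as [_|Hne]; [reflexivity | contradiction].
Qed.

Lemma y_of_eps_opp n x : (2 <= n)%nat -> eps n x = (- eps (n - 1) x)%Z ->
  y n x = IZR (d (n - 1) x + 1) * Nat.iter (n - 1) T x.
Proof.
  intros Hn E; destruct n as [|[|m]]; try lia.
  change (S (S m) - 1)%nat with (S m) in *.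
  pose proof (eps_neq0 (S m) x).
  unfold y; rewrite plus_IZR.
  destruct (Z.eq_dec _ _) as [Heq|_]; [lia | reflexivity].
Qed.

Theorem lemma3p5 (r : nat) (x : R) :
  (0 < r)%nat -> Nat.odd r = true -> in_I x ->
  (y 1 x <= 1 / INR r <-> (d 1 x >= Z.of_nat r)%Z) /\
  (forall n : nat, (2 <= n)%nat -> eps n x = eps (n - 1) x ->
     (y n x <= 1 / INR r <-> (d n x >= Z.of_nat r * (d (n - 1) x - 1))%Z)) /\
  (forall n : nat, (2 <= n)%nat -> eps n x = (- eps (n - 1) x)%Z ->
     (y n x <= 1 / INR r <-> (d n x >= Z.of_nat r * (d (n - 1) x + 1))%Z)).
Proof.
  intros Hr Hodd Hx.
  assert (Hq : (0 < Z.of_nat r)%Z) by lia.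
  assert (Hqodd : Z.Odd (Z.of_nat r)).
  { apply Nat.odd_spec in Hodd; destruct Hodd as [j Hj]; exists (Z.of_nat j); lia. }
  rewrite INR_IZR_INZ; split; [|split].
  - apply le_inv_iff_d1_ge; assumption.
  - intros n Hn E; rewrite y_of_eps_eq by assumption.
    destruct (d_even_ge_2 (n - 1) x Hx) as [[j Hj] Hd].
    apply mul_le_inv_iff_d1_ge; try apply iter_T_in_I; try assumption; try lia.
    exists (j - 1)%Z; lia.
  - intros n Hn E; rewrite y_of_eps_opp by assumption.
    destruct (d_even_ge_2 (n - 1) x Hx) as [[j Hj] Hd].
    apply mul_le_inv_iff_d1_ge; try apply iter_T_in_I; try assumption; try lia.
    exists j; lia.
Qed.
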